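(* Let $H$ be an atomic hypergraph and suppose the rank $r=|\bigcup H|-n$ of $\mathcal A(H)$ (with $n$ the connectedness number of $H$) satisfies $r>0$. Then every vertex of $\mathcal A(H)$ is contained in exactly $r$ facets of $\mathcal A(H)$ (i.e. is $\le$-comparable with exactly $r$ faces of rank $r-1$).
   Context: A hypergraph is a finite set $H$ of nonempty subsets of some finite set; its carrier is $\bigcup H$. For a family $F$ and set $Y$, $F_Y=\{X\in F\mid X\subseteq Y\}$. A hypergraph partition of $H$ is a partition $\{H_1,\dots,H_n\}$ ($n\ge0$) of the set $H$ with $\{\bigcup H_1,\dots,\bigcup H_n\}$ a partition of $\bigcup H$; $H$ is connected if it has exactly one hypergraph partition; the finest hypergraph partition is the unique one whose blocks are connected; its blocks are the connected components, the sets $\bigcup H_i$ are the connected components of the carrier, and their number $n$ is the connectedness number. $H$ is atomic if $\{x\}\in H$ for all $x\in\bigcup H$. Constructions of an atomic $H$, by induction on $|\bigcup H|$: (0) $\emptyset$ is the only construction of $\emptyset$; (1) if $|\bigcup H|\ge1$, $H$ connected, $x\in\bigcup H$, $K$ a construction of $H_{\bigcup H\setminus\{x\}}$, then $K\cup\{\bigcup H\}$ is a construction of $H$; (2) if $H$ is not connected with finest hypergraph partition $\{H_1,\dots,H_n\}$, $n\ge2$, and $K_i$ is a construction of $H_i$, then $K_1\cup\dots\cup K_n$ is a construction of $H$. A construct of $H$ is a subset of some construction of $H$ that contains every connected component of the carrier $\bigcup H$. $H$ is saturated if $X_1,X_2\in H$, $X_1\cap X_2\ne\emptyset$ imply $X_1\cup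 X_2\in H$; the saturated closure $\bar H$ is the saturated hypergraph obtained by adding to $H$ all sets equivalent under the following: $Y\subseteq \bigcup H$ is dispensable in $H$ if $H_Y\setminus\{Y\}$ is connected with carrier $Y$, and $\bar H$ is the largest hypergraph obtainable from $H$ by repeatedly adding dispensable sets. The poset $\mathcal A(H)$ has as elements all constructs of $H$ together with $\bar H^*=\bar H\cup\{*\}$ for a new element $*\notin\bigcup H$, ordered by $C_1\le C_2$ iff $C_2\subseteq C_1$. Its rank is $r=|\bigcup H|-n$; for $0\le k\le r$, the faces of rank $k$ are the constructs of cardinality $|\bigcup H|-k$, and $\bar H^*$ is the unique face of rank $-1$. Vertices are faces of rank $0$ (these are exactly the constructions), facets are faces of rank $r-1$. *)

From mathcomp Require Import all_boot.
Set Implicit Arguments. Unset Strict Implicit. Unset Printing Implicit Defensive.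

Section Hyper.
Variable T : finType.
Implicit Types (H B K C : {set {set T}}) (P : {set {set {set T}}}) (Y : {set T}).

Definition hypergraph H : bool := set0 \notin H.

Definition carrier H : {set T} := cover H.

Definition restrict H Y : {set {set T}} := [set X in H | X \subset Y].

(* hypergraph partition: a partition of the set H whose block carriers
   form a partition of the carrier (distinct blocks have disjoint carriers;
   blocks are nonempty, hence so are their carriers) *)
Definition hpartition H P : bool :=
  partition P H &&
  [forall B1 in P, forall B2 in P,
     (B1 != B2) ==> [disjoint carrier B1 & carrier B2]].

Definition connected H : bool := #|[set P | hpartition H P]| == 1.

(* finest hypergraph partition: a hypergraph partition with connected blocks
   (unique by the paper) *)
Definition finest_hpartition H P : bool :=
  hpartition H P && [forall B in P, connected B].

Definition finest_part H : {set {set {set T}}} :=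
  odflt set0 [pick P | finest_hpartition H P].

Definition carrier_components H : {set {set T}} :=
  [set carrier B | B in finest_part H].

Definition conn_number H : nat := #|finest_part H|.

Definition atomic H : bool := [forall x in carrier H, [set x] \in H].

Inductive construction : {set {set T}} -> {set {set T}} -> Prop :=
| constr_empty : construction set0 set0
| constr_conn : forall H (x : T) K,
    0 < #|carrier H| -> connected H -> x \in carrier H ->
    construction (restrict H (carrier H :\ x)) K ->
    construction H (K :|: [set carrier H])
| constr_disc : forall H P (Ks : {set {set T}} -> {set {set T}}),
    ~~ connected H -> finest_hpartition H P -> 2 <= #|P| ->
    (forall B, B \in P -> construction B (Ks B)) ->
    construction H (\bigcup_(B in P) Ks B).

Definition construct H C : Prop :=
  (exists2 K, construction H K & C \subset K) /\
  carrier_components H \subset C.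

Definition rankA H : nat := #|carrier H| - conn_number H.

Definition face_of_rank H k C : Prop :=
  k <= rankA H /\ construct H C /\ #|C| = #|carrier H| - k.

Definition vertex H C : Prop := face_of_rank H 0 C.
Definition facet H C : Prop := face_of_rank H (rankA H).-1 C.

(* the order of A(H): C1 <= C2 iff C2 \subset C1; comparability *)
Definition comparableA C1 C2 : bool := (C2 \subset C1) || (C1 \subset C2).

End Hyper.

From mathcomp Require Import all_boot zify.

Set Implicit Arguments.
Unset Strict Implicit.
Unset Printing Implicit Defensive.

(* A vertex V is a construct with |carrier H| elements and a facet one with
   n + 1 elements, n the number of connected components; both contain the
   set c of components.  Since n + 1 <= |V|, a facet comparable with V is
   contained in it, so the facets through V are exactly the sets c + {X} with
   X in V \ c, and there are |V| - n = r of them. *)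

Section OnePointExtensions.
Variable U : finType.
Variables c V : {set U}.
Hypothesis cV : c \subset V.

Definition one_point_extensions : {set {set U}} :=
  [set c :|: [set X] | X in V :\: c].

Lemma card_one_point_extensions : #|one_point_extensions| = #|V| - #|c|.
Proof.
rewrite card_in_imset; first by rewrite cardsD (setIidPr cV).
move=> X Y /setDP [_ Xc] _ eXY.
have : X \in c :|: [set Y] by rewrite -eXY in_setU set11 orbT.
by rewrite in_setU (negbTE Xc) => /set1P.
Qed.

Lemma mem_one_point_extensions F :
  (F \in one_point_extensions) = [&& c \subset F, F \subset V & #|F| == #|c|.+1].
Proof.
apply/imsetP/and3P => [[X /setDP [XV Xc] ->] | [cF FV /eqP cardF]].
  by rewrite subsetUl subUset cV sub1set XV setUC cardsU1 Xc.
have /cards1P [X FcX] : #|F :\: c| == 1.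
  by rewrite cardsD (setIidPr cF) cardF subSnn.
have /setDP [XF Xc] : X \in F :\: c by rewrite FcX set11.
exists X; first by rewrite in_setD Xc (subsetP FV).
by rewrite -FcX -{1}(setIidPr cF) setID.
Qed.

End OnePointExtensions.

Section Faces.
Variable T : finType.
Implicit Types (H C F V : {set {set T}}).

Lemma card_carrier_components H :
  hypergraph H -> #|carrier_components H| = conn_number H.
Proof.
move=> hH; rewrite /carrier_components /conn_number /finest_part.
case: pickP => [P /andP [/andP [/and3P [/eqP coverP _ P0] disjP] _] | _] /=; last first.
  by rewrite imset0 !cards0.
apply: card_in_imset => B1 B2 B1P B2P eqB.
apply: contraTeq isT => neqB.
have disjB : [disjoint carrier B1 & carrier B2].
  by move/forallP/(_ B1): disjP; rewrite B1P => /forallP/(_ B2); rewrite B2P neqB.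
have /set0Pn [X XB1] : B1 != set0 by apply: contraNneq P0 => <-.
have /set0Pn [x xX] : X != set0.
  apply: contraNneq hH => <-; rewrite -coverP; apply/bigcupP; exists B1 => //.
have xB1 : x \in carrier B1 by apply/bigcupP; exists X.
by have := disjointFr disjB xB1; rewrite -eqB xB1.
Qed.

Lemma construct_subset H C F :
  construct H C -> carrier_components H \subset F -> F \subset C ->
  construct H F.
Proof.
by move=> [[K HK CK] _] cF FC; split=> //; exists K; last exact: subset_trans CK.
Qed.

Lemma card_facet H F :
  0 < rankA H -> facet H F -> #|F| = (conn_number H).+1.
Proof. by move=> r0 [_ [_ ->]]; move: r0; rewrite /rankA; lia. Qed.

Lemma comparableA_card_leq C F : #|F| <= #|C| -> comparableA C F = (F \subset C).
Proof.
move=> leFC; rewrite /comparableA orbC; case: (boolP (C \subset F)) => //= CF.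
have /eqP -> : C == F by rewrite eqEcard CF leFC.
by rewrite subxx.
Qed.

Lemma facet_comparable_vertexE H V F :
  hypergraph H -> 0 < rankA H -> vertex H V ->
  facet H F /\ comparableA V F <->
  [&& carrier_components H \subset F, F \subset V &
      #|F| == #|carrier_components H|.+1].
Proof.
move=> hH r0 [_ [conV cardV]]; rewrite card_carrier_components //.
have cardVn : #|V| = #|carrier H| by rewrite cardV subn0.
have rE : rankA H = #|carrier H| - conn_number H by [].
split=> [[fF cmpVF] | /and3P [cF FV /eqP cardF]].
  have [_ [[_ cF] _]] := fF; have cardF := card_facet r0 fF.
  move: cmpVF; rewrite comparableA_card_leq; last by rewrite cardF cardVn; lia.
  by move=> FV; rewrite cF FV cardF eqxx.
rewrite /comparableA FV; split=> //; split; first exact: leq_pred.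
by split; [exact: construct_subset conV cF FV | rewrite cardF; lia].
Qed.

End Faces.

Theorem proposition5p2 (T : finType) (H : {set {set T}}) :
  hypergraph H -> atomic H -> 0 < rankA H ->
  forall V : {set {set T}}, vertex H V ->
  exists S : {set {set {set T}}},
    #|S| = rankA H /\
    (forall F : {set {set T}}, F \in S <-> (facet H F /\ comparableA V F)).
Proof.
move=> hH _ r0 V vV; have [_ [[_ cV] cardV]] := vV.
exists (one_point_extensions (carrier_components H) V); split.
  by rewrite card_one_point_extensions // cardV subn0 card_carrier_components.
by move=> F; rewrite mem_one_point_extensions // facet_comparable_vertexE.
Qed.
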